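(* The pair $(\mathbf I,\{0,1\})$, where $\{0,1\}$ carries the subspace structure, is an SNDR pair.
   Context: A Frölicher space is a triple $(X,\mathcal C_X,\mathcal F_X)$ with $\mathcal C_X\subseteq X^{\mathbb R}$, $\mathcal F_X\subseteq\mathbb R^X$, such that $\mathcal F_X=\{f\mid f\circ c\in C^\infty(\mathbb R,\mathbb R)\ \forall c\in\mathcal C_X\}$ and $\mathcal C_X=\{c\mid f\circ c\in C^\infty(\mathbb R,\mathbb R)\ \forall f\in\mathcal F_X\}$. A map $\varphi:X\to Y$ is smooth if $g\circ\varphi\in\mathcal F_X$ for all $g\in\mathcal F_Y$. Subspaces carry the initial structure; products the structure generated by $f\circ\pi_i$. $I$ is $[0,1]$ with the subspace structure from $\mathbb R$ ($\mathcal F_I$ its structure functions). $\mathbf I$ is $[0,1]$ with the structure generated by those $f\in\mathcal F_I$ for which some $0<\epsilon<1/4$ has $f$ constant on $[0,\epsilon)$ and on $(1-\epsilon,1]$. FCIP: Let $i:A\to X$ be smooth. For a structure curve $x:\mathbb R\to X$ let $\Lambda(x,i)$ be the set of $s_*\in x^{-1}(i(A))$ that are limits of sequences $s_n\in x^{-1}(X\setminus i(A))$. A structure function $f$ on $\mathbf I\times X$ has the FCIP with respect to $i$ if $f\circ c$ is $C^\infty$ for every map $c=(t,x):\mathbb R\to[0,1]\times X$ such that $x$ is a structure curve of $X$ and, for every $\epsilon>0$, $t$ is $C^\infty$ on every open interval disjoint from $\bigcup_{s_*\in\Lambda(x,i)}[s_*-\epsilon,s_*+\epsilon]$. A map $g:\mathbf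 I\times X\to Y$ has the FCIP w.r.t. $i$ if $h\circ g$ does for every $h\in\mathcal F_Y$. SNDR pair: for a smooth inclusion $i:A\hookrightarrow X$, $(X,A)$ is an SNDR pair if there are a smooth $u:X\to\mathbf I$ with $u^{-1}(0)=i(A)$ and a smooth $H:\mathbf I\times X\to X$ having the FCIP w.r.t. $i$, with $H(0,x)=x$ for all $x$, $H(t,a)=a$ for all $t$ and $a\in i(A)$, and $H(1,x)\in i(A)$ whenever $u(x)<1$. *)

From Stdlib Require Import Reals.
Open Scope R_scope.

Definition smooth (f : R -> R) : Prop :=
  exists d : nat -> R -> R,
    (forall x, d O x = f x) /\
    (forall n x, derivable_pt_lim (d n) x (d (S n) x)).

(** Open intervals (a,b) with possibly infinite endpoints (None = -oo / +oo). *)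
Definition in_int (a b : option R) (s : R) : Prop :=
  (match a with None => True | Some a' => a' < s end) /\
  (match b with None => True | Some b' => s < b' end).

Definition smooth_on (a b : option R) (f : R -> R) : Prop :=
  exists d : nat -> R -> R,
    forall x, in_int a b x ->
      d O x = f x /\ (forall n, derivable_pt_lim (d n) x (d (S n) x)).

(** A Frölicher space, presented by a generating family of functions:
    curves = {c | f o c smooth for all generators f},
    functions = {f | f o c smooth for all curves c}.
    Every Frölicher space is generated by its structure functions. *)
Record Frol := { car : Type; gen : (car -> R) -> Prop }.

Definition curve (X : Frol) (c : R -> car X) : Prop :=
  forall f, gen X f -> smooth (fun s => f (c s)).

Definition sfun (X : Frol) (f : car X -> R) : Prop :=
  forall c, curve X c -> smooth (fun s => f (c s)).

Definition smooth_map (X Y : Frol) (phi : car X -> car Y) : Prop :=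
  forall g, sfun Y g -> sfun X (fun x => g (phi x)).

Definition Rspace : Frol := {| car := R; gen := smooth |}.

Definition Subspace (X : Frol) (P : car X -> Prop) : Frol :=
  {| car := { x : car X | P x };
     gen := fun g => exists f, sfun X f /\ g = (fun a => f (proj1_sig a)) |}.

Definition Product (X Y : Frol) : Frol :=
  {| car := (car X * car Y)%type;
     gen := fun g =>
       (exists f, sfun X f /\ g = (fun p => f (fst p))) \/
       (exists f, sfun Y f /\ g = (fun p => f (snd p))) |}.

Definition Ispace : Frol := Subspace Rspace (fun x => 0 <= x <= 1).

Definition Ibold : Frol :=
  {| car := car Ispace;
     gen := fun f => sfun Ispace f /\
       exists eps, 0 < eps < 1/4 /\
         (forall x y : car Ispace, proj1_sig x < eps -> proj1_sig y < eps -> f x = f y) /\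
         (forall x y : car Ispace, 1 - eps < proj1_sig x -> 1 - eps < proj1_sig y -> f x = f y) |}.

Definition I0 : car Ibold := exist _ 0 (conj (Rle_refl 0) Rle_0_1).
Definition I1 : car Ibold := exist _ 1 (conj Rle_0_1 (Rle_refl 1)).

Definition Ends : Frol :=
  Subspace Ibold (fun x => proj1_sig x = 0 \/ proj1_sig x = 1).

Definition incl : car Ends -> car Ibold := fun a => proj1_sig a.

Definition Lambda (X A : Frol) (i : car A -> car X) (x : R -> car X) (s : R) : Prop :=
  (exists a, i a = x s) /\
  exists sn : nat -> R, Un_cv sn s /\ forall n, ~ (exists a, i a = x (sn n)).

Definition FCIP_fun (X A : Frol) (i : car A -> car X)
    (f : car (Product Ibold X) -> R) : Prop :=
  forall (t : R -> car Ibold) (x : R -> car X),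
    curve X x ->
    (forall eps, 0 < eps ->
       forall a b : option R,
         (forall s, in_int a b s -> forall s', Lambda X A i x s' -> eps < Rabs (s - s')) ->
         smooth_on a b (fun s => proj1_sig (t s))) ->
    smooth (fun s => f (t s, x s)).

Definition FCIP_map (X A Y : Frol) (i : car A -> car X)
    (g : car (Product Ibold X) -> car Y) : Prop :=
  forall h, sfun Y h -> FCIP_fun X A i (fun p => h (g p)).

Definition SNDR (X A : Frol) (i : car A -> car X) : Prop :=
  smooth_map A X i /\
  exists u : car X -> car Ibold,
    smooth_map X Ibold u /\
    (forall x, proj1_sig (u x) = 0 <-> exists a, i a = x) /\
    exists H : car (Product Ibold X) -> car X,
      smooth_map (Product Ibold X) X H /\
      FCIP_map X A X i H /\
      (forall x, H (I0, x) = x) /\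
      (forall t a, H (t, i a) = i a) /\
      (forall x, proj1_sig (u x) < 1 -> exists a, H (I1, x) = i a).

From Pilot Require Import Defs.
From Stdlib Require Import Reals Lra Lia ClassicalEpsilon FunctionalExtensionality ProofIrrelevance.
Open Scope R_scope.

(** We take u(x) = clamp(8x(1-x)) and
      H(t, x) = clamp((1 + 3 kappa(t)) (x - 1/2) + 1/2),
    where kappa is a smooth step, 0 on [0,1/3] and 1 on [2/3,1].  Then
    u vanishes exactly at 0 and 1, H(0,-) is the identity, H(t,-) fixes
    0 and 1, and H(1,x) = clamp(4x - 3/2) lies in {0,1} whenever u(x) < 1.

    All the work lies in smoothness.  The key facts about
    bold I are then:
    - [Ibold_curve_local]: near every parameter, a curve of bold I either
      stays close to an end or is an ordinary smooth real function;
    - [clamp_curve]: a real path that near every parameter stays close to an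
      end or is smooth clamps to a curve of bold I.
    Both u and H send curves to curves by combining these two facts; for the
    FCIP the parameter t is only smooth away from the points of Lambda, which
    is enough because H is locally constant where x is close to 0 or 1. *)

(** * Smoothness on open sets *)

Definition open_set (U : R -> Prop) : Prop :=
  forall x, U x -> exists d, 0 < d /\ forall y, Rabs (y - x) < d -> U y.

Definition everywhere : R -> Prop := fun _ => True.

Lemma open_everywhere : open_set everywhere.
Proof. intros x _; exists 1; split; [lra | intros; exact I]. Qed.

Fixpoint Ck_on (U : R -> Prop) (k : nat) (f : R -> R) : Prop :=
  match k with
  | O => True
  | S m => exists f', (forall x, U x -> derivable_pt_lim f x (f' x)) /\ Ck_on U m f'
  end.

Definition smooth_in (U : R -> Prop) (f : R -> R) : Prop := forall k, Ck_on U k f.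

Lemma derivable_pt_lim_near f g x l d : 0 < d ->
  (forall y, Rabs (y - x) < d -> f y = g y) ->
  derivable_pt_lim f x l -> derivable_pt_lim g x l.
Proof.
  intros Hd Hfg H. apply derivable_pt_lim_locally_ext with f (x - d) (x + d); auto; [lra|].
  intros z Hz; apply Hfg, Rabs_def1; lra.
Qed.

Lemma Ck_on_pred U k f : Ck_on U (S k) f -> Ck_on U k f.
Proof.
  revert f; induction k as [|k IH]; intros f H; simpl; auto.
  destruct H as [f' [H1 H2]]. exists f'; split; auto.
Qed.

Lemma Ck_on_ext U k f g : open_set U -> (forall x, U x -> f x = g x) ->
  Ck_on U k f -> Ck_on U k g.
Proof.
  intros HU Hfg H. destruct k as [|k]; simpl; auto.
  destruct H as [f' [H1 H2]]. exists f'; split; auto.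
  intros x Hx. destruct (HU x Hx) as [d [Hd Hball]].
  apply derivable_pt_lim_near with f d; auto.
Qed.

Lemma Ck_on_sub U V k f : (forall x, V x -> U x) -> Ck_on U k f -> Ck_on V k f.
Proof.
  revert f; induction k as [|k IH]; intros f HVU H; simpl; auto.
  destruct H as [f' [H1 H2]]. exists f'; split; auto.
Qed.

Lemma Ck_on_const U k c : Ck_on U k (fun _ => c).
Proof.
  revert c; induction k as [|k IH]; intros c; simpl; auto.
  exists (fun _ => 0); split; auto. intros; apply derivable_pt_lim_const.
Qed.

Lemma Ck_on_id U k : Ck_on U k (fun x => x).
Proof.
  destruct k; simpl; auto. exists (fun _ => 1); split.
  - intros; apply derivable_pt_lim_id.
  - apply Ck_on_const.
Qed.

Lemma Ck_on_plus U k f g : Ck_on U k f -> Ck_on U k g -> Ck_on U k (fun x => f x + g x).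
Proof.
  revert f g; induction k as [|k IH]; intros f g Hf Hg; simpl; auto.
  destruct Hf as [f' [F1 F2]], Hg as [g' [G1 G2]].
  exists (fun x => f' x + g' x); split; auto.
  intros x Hx. apply (derivable_pt_lim_plus f g); auto.
Qed.

Lemma Ck_on_mult U k f g : Ck_on U k f -> Ck_on U k g -> Ck_on U k (fun x => f x * g x).
Proof.
  revert f g; induction k as [|k IH]; intros f g Hf Hg; simpl; auto.
  pose proof (Ck_on_pred _ _ _ Hf) as Hf0. pose proof (Ck_on_pred _ _ _ Hg) as Hg0.
  destruct Hf as [f' [F1 F2]], Hg as [g' [G1 G2]].
  exists (fun x => f' x * g x + f x * g' x); split.
  - intros x Hx. apply (derivable_pt_lim_mult f g); auto.
  - apply Ck_on_plus; apply IH; auto.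
Qed.

Lemma Ck_on_scal U k c f : Ck_on U k f -> Ck_on U k (fun x => c * f x).
Proof. intros; apply Ck_on_mult; auto; apply Ck_on_const. Qed.

Lemma Ck_on_opp U k f : Ck_on U k f -> Ck_on U k (fun x => - f x).
Proof.
  intros H. replace (fun x => - f x) with (fun x => (-1) * f x).
  - apply Ck_on_scal; auto.
  - apply functional_extensionality; intros; ring.
Qed.

Lemma smooth_in_deriv U f : open_set U -> smooth_in U f ->
  exists f1, (forall x, U x -> derivable_pt_lim f x (f1 x)) /\ smooth_in U f1.
Proof.
  intros HU H. destruct (H 1%nat) as [f1 [H1 _]]. exists f1; split; auto.
  intros k. destruct (H (S k)) as [f2 [H3 H4]]. apply Ck_on_ext with f2; auto.
  intros x Hx. eapply uniqueness_limite; eauto.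
Qed.

Lemma Ck_on_comp U k f g : smooth_in everywhere f -> Ck_on U k g ->
  Ck_on U k (fun x => f (g x)).
Proof.
  revert f g; induction k as [|k IH]; intros f g Hf Hg; simpl; auto.
  destruct (smooth_in_deriv _ _ open_everywhere Hf) as [f1 [F1 F2]].
  pose proof (Ck_on_pred _ _ _ Hg) as Hg0. destruct Hg as [g' [G1 G2]].
  exists (fun x => f1 (g x) * g' x); split.
  - intros x Hx. apply (derivable_pt_lim_comp g f); auto. apply F1; exact I.
  - apply Ck_on_mult; auto.
Qed.

Lemma Ck_on_inv U k g : (forall x, U x -> g x <> 0) -> Ck_on U k g ->
  Ck_on U k (fun x => / g x).
Proof.
  revert g; induction k as [|k IH]; intros g Hnz Hg; simpl; auto.
  pose proof (Ck_on_pred _ _ _ Hg) as Hg0. destruct Hg as [g' [G1 G2]].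
  exists (fun x => - g' x * (/ g x * / g x)); split.
  - intros x Hx.
    pose proof (derivable_pt_lim_div (fct_cte 1) g x 0 (g' x)
                  (derivable_pt_lim_const 1 x) (G1 x Hx) (Hnz x Hx)) as Dq.
    replace (- g' x * (/ g x * / g x))
      with ((0 * g x - g' x * fct_cte 1 x) / Rsqr (g x))
      by (unfold fct_cte, Rsqr; field; auto).
    apply derivable_pt_lim_ext with (2 := Dq). intros; unfold div_fct, fct_cte, Rdiv; ring.
  - apply Ck_on_mult; [apply Ck_on_opp; auto|]. apply Ck_on_mult; apply IH; auto.
Qed.

(** A chosen derivative, used to glue local derivatives into global ones. *)
Definition deriv (g : R -> R) (x : R) : R :=
  epsilon (inhabits 0) (fun l => derivable_pt_lim g x l).

Lemma deriv_spec g x l : derivable_pt_lim g x l -> deriv g x = l.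
Proof.
  intros H. apply (uniqueness_limite g x); auto.
  apply (epsilon_spec (inhabits 0) (fun l => derivable_pt_lim g x l)). exists l; auto.
Qed.

Lemma smooth_in_deriv_chosen U f : open_set U -> smooth_in U f ->
  (forall x, U x -> derivable_pt_lim f x (deriv f x)) /\ smooth_in U (deriv f).
Proof.
  intros HU H. destruct (smooth_in_deriv _ _ HU H) as [f1 [H1 H2]]. split.
  - intros x Hx. rewrite (deriv_spec _ _ _ (H1 x Hx)). auto.
  - intros k. apply Ck_on_ext with f1; auto. intros x Hx. symmetry; apply deriv_spec; auto.
Qed.

Definition smooth_at (f : R -> R) (s0 : R) : Prop :=
  exists U, open_set U /\ U s0 /\ smooth_in U f.

Lemma smooth_in_glue f : (forall x, smooth_at f x) -> smooth_in everywhere f.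
Proof.
  intros H k. revert f H; induction k as [|k IH]; intros f H; simpl; auto.
  exists (deriv f); split.
  - intros x _. destruct (H x) as [U [HU [Ux HS]]].
    apply (proj1 (smooth_in_deriv_chosen _ _ HU HS)); auto.
  - apply IH. intros x. destruct (H x) as [U [HU [Ux HS]]].
    exists U; repeat split; auto. apply (proj2 (smooth_in_deriv_chosen _ _ HU HS)).
Qed.

Lemma smooth_in_everywhere f : smooth f -> smooth_in everywhere f.
Proof.
  intros [d [H0 H1]].
  assert (Hd : forall k n, Ck_on everywhere k (d n)).
  { induction k as [|k IH]; intros n; simpl; auto. exists (d (S n)); split; auto. }
  replace f with (d O); [intros k; apply Hd|]. apply functional_extensionality; auto.
Qed.

Lemma smooth_of_smooth_in f : smooth_in everywhere f -> smooth f.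
Proof.
  intros H. exists (fun n => Nat.iter n deriv f).
  assert (Hn : forall n, smooth_in everywhere (Nat.iter n deriv f)).
  { induction n as [|n IH]; simpl; auto.
    apply (proj2 (smooth_in_deriv_chosen _ _ open_everywhere IH)). }
  split; [reflexivity|]. intros n x.
  apply (proj1 (smooth_in_deriv_chosen _ _ open_everywhere (Hn n))). exact I.
Qed.

Lemma smooth_glue f : (forall x, smooth_at f x) -> smooth f.
Proof. intros H; apply smooth_of_smooth_in, smooth_in_glue, H. Qed.

Lemma smooth_at_of_smooth f s0 : smooth f -> smooth_at f s0.
Proof.
  intros H. exists everywhere; split; [apply open_everywhere|]. split; [exact I|].
  apply smooth_in_everywhere, H.
Qed.

Lemma smooth_in_sub U V f : (forall x, V x -> U x) -> smooth_in U f -> smooth_in V f.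
Proof. intros H1 H2 k; eapply Ck_on_sub; eauto. Qed.

Lemma smooth_in_ext U f g : open_set U -> (forall x, U x -> f x = g x) ->
  smooth_in U f -> smooth_in U g.
Proof. intros H1 H2 H3 k; eapply Ck_on_ext; eauto. Qed.

Lemma smooth_in_of_smooth U f : smooth f -> smooth_in U f.
Proof.
  intros H. apply smooth_in_sub with everywhere; [intros; exact I|].
  apply smooth_in_everywhere, H.
Qed.

Lemma smooth_comp f g : smooth_in everywhere f -> smooth g -> smooth (fun s => f (g s)).
Proof.
  intros Hf Hg. apply smooth_of_smooth_in. intros k.
  apply Ck_on_comp; auto. apply smooth_in_everywhere; auto.
Qed.

Lemma smooth_in_continuous U f x : smooth_in U f -> U x -> continuity_pt f x.
Proof.
  intros H Ux. destruct (H 1%nat) as [f' [H1 _]].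
  apply (derivable_continuous_pt f x (exist _ (f' x) (H1 x Ux))).
Qed.

Lemma open_in_int a b : open_set (Defs.in_int a b).
Proof.
  intros x [Ha Hb].
  set (da := match a with None => 1 | Some a' => x - a' end).
  set (db := match b with None => 1 | Some b' => b' - x end).
  assert (0 < da) by (unfold da; destruct a; lra).
  assert (0 < db) by (unfold db; destruct b; lra).
  exists (Rmin da db); split; [apply Rmin_pos; auto|].
  intros y Hy. pose proof (Rmin_l da db). pose proof (Rmin_r da db).
  apply Rabs_def2 in Hy. split.
  - destruct a; auto. unfold da in *; lra.
  - destruct b; auto. unfold db in *; lra.
Qed.

Lemma smooth_in_int a b f : smooth_on a b f -> smooth_in (Defs.in_int a b) f.
Proof.
  intros [d Hd].
  assert (Hk : forall k n, Ck_on (Defs.in_int a b) k (d n)).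
  { induction k as [|k IH]; intros n; simpl; auto.
    exists (d (S n)); split; auto. intros x Hx; apply (Hd x Hx). }
  intros k. apply Ck_on_ext with (d O); auto; [apply open_in_int|].
  intros x Hx; apply (Hd x Hx).
Qed.

Definition near (s0 : R) (P : R -> Prop) : Prop :=
  exists d, 0 < d /\ forall s, Rabs (s - s0) < d -> P s.

Lemma near_and s0 P Q : near s0 P -> near s0 Q -> near s0 (fun s => P s /\ Q s).
Proof.
  intros [d1 [H1 P1]] [d2 [H2 P2]]. exists (Rmin d1 d2); split; [apply Rmin_pos; auto|].
  intros s Hs. pose proof (Rmin_l d1 d2); pose proof (Rmin_r d1 d2).
  split; [apply P1 | apply P2]; lra.
Qed.

Lemma near_mono s0 (P Q : R -> Prop) : (forall s, P s -> Q s) -> near s0 P -> near s0 Q.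
Proof. intros H [d [Hd HP]]; exists d; split; auto. Qed.

Lemma ball_open s0 d : open_set (fun s => Rabs (s - s0) < d).
Proof.
  intros x Hx. exists (d - Rabs (x - s0)); split; [lra|]. intros y Hy.
  pose proof (Rabs_triang (y - x) (x - s0)) as T.
  replace (y - x + (x - s0)) with (y - s0) in T by ring. lra.
Qed.

Lemma near_open s0 U : open_set U -> U s0 -> near s0 U.
Proof. intros HU H. destruct (HU s0 H) as [d [Hd Hball]]. exists d; auto. Qed.

Lemma open_inter U V : open_set U -> open_set V -> open_set (fun s => U s /\ V s).
Proof.
  intros HU HV x [Ux Vx].
  destruct (near_and _ _ _ (near_open _ _ HU Ux) (near_open _ _ HV Vx)) as [d Hd].
  exists d; exact Hd.
Qed.

Lemma continuous_lt h s0 c : continuity_pt h s0 -> h s0 < c -> near s0 (fun s => h s < c).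
Proof.
  intros Hc Hlt. destruct (Hc (c - h s0)) as [a [Ha Hal]]; [lra|].
  exists a; split; auto. intros s Hs. destruct (Req_dec s s0) as [->|Hne]; auto.
  assert (Hd : Rabs (h s - h s0) < c - h s0).
  { apply (Hal s). split; [split; [exact I | auto] | auto]. }
  apply Rabs_def2 in Hd; lra.
Qed.

Lemma continuous_gt h s0 c : continuity_pt h s0 -> c < h s0 -> near s0 (fun s => c < h s).
Proof.
  intros Hc Hlt.
  assert (Ho : continuity_pt (fun s => - h s) s0) by (apply continuity_pt_opp; auto).
  apply near_mono with (fun s => - h s < - c); [intros; lra|].
  apply continuous_lt; auto; lra.
Qed.

Lemma smooth_at_near_eq f g s0 : near s0 (fun s => f s = g s) ->
  smooth_at f s0 -> smooth_at g s0.
Proof.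
  intros [d [Hd Heq]] [U [HU [Us0 HS]]].
  exists (fun s => U s /\ Rabs (s - s0) < d).
  assert (HV : open_set (fun s => U s /\ Rabs (s - s0) < d))
    by (apply open_inter; [auto | apply ball_open]).
  split; [auto|]. split; [split; [auto | rewrite Rminus_diag, Rabs_R0; auto]|].
  apply smooth_in_ext with f; auto; [intros s [_ Hs]; auto|].
  apply smooth_in_sub with U; [intros s []; auto | auto].
Qed.

Lemma smooth_const c : smooth (fun _ => c).
Proof. apply smooth_of_smooth_in; intros k; apply Ck_on_const. Qed.

Lemma smooth_at_near_const g c s0 : near s0 (fun s => g s = c) -> smooth_at g s0.
Proof.
  intros H. apply smooth_at_near_eq with (fun _ => c).
  - apply near_mono with (2 := H); intros s E; auto.
  - apply smooth_at_of_smooth, smooth_const.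
Qed.

Lemma smooth_at_both f g s0 : smooth_at f s0 -> smooth_at g s0 ->
  exists U, open_set U /\ U s0 /\ smooth_in U f /\ smooth_in U g.
Proof.
  intros [U [HU [Us0 Hf]]] [V [HV [Vs0 Hg]]].
  exists (fun s => U s /\ V s); split; [apply open_inter; auto|].
  split; [auto|]. split; [apply smooth_in_sub with U | apply smooth_in_sub with V];
    auto; intros s []; auto.
Qed.

(** * The flat functions p(1/y) exp(-1/y) *)

Inductive poly : (R -> R) -> Prop :=
| poly_const c : poly (fun _ => c)
| poly_id : poly (fun z => z)
| poly_add p q : poly p -> poly q -> poly (fun z => p z + q z)
| poly_mul p q : poly p -> poly q -> poly (fun z => p z * q z).

Lemma poly_deriv p : poly p ->
  exists p', poly p' /\ forall z, derivable_pt_lim p z (p' z).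
Proof.
  induction 1 as [c| |p q Hp [p' [P1 P2]] Hq [q' [Q1 Q2]]
                 |p q Hp [p' [P1 P2]] Hq [q' [Q1 Q2]]].
  - exists (fun _ => 0); split; [constructor|]. intros; apply derivable_pt_lim_const.
  - exists (fun _ => 1); split; [constructor|]. intros; apply derivable_pt_lim_id.
  - exists (fun z => p' z + q' z); split; [constructor; auto|].
    intros z; apply (derivable_pt_lim_plus p q); auto.
  - exists (fun z => p' z * q z + p z * q' z); split; [repeat constructor; auto|].
    intros z; apply (derivable_pt_lim_mult p q); auto.
Qed.

Lemma poly_bound p : poly p ->
  exists C k, 0 <= C /\ forall z, 1 <= z -> Rabs (p z) <= C * z ^ k.
Proof.
  induction 1 as [c| |p q _ [C1 [k1 [H1 P1]]] _ [C2 [k2 [H2 P2]]]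
                 |p q _ [C1 [k1 [H1 P1]]] _ [C2 [k2 [H2 P2]]]].
  - exists (Rabs c), O; split; [apply Rabs_pos|]. intros; simpl; lra.
  - exists 1, 1%nat; split; [lra|]. intros; simpl. rewrite Rabs_right; lra.
  - exists (C1 + C2), (k1 + k2)%nat; split; [lra|]. intros z Hz.
    pose proof (Rle_pow z k1 (k1 + k2) Hz ltac:(lia)).
    pose proof (Rle_pow z k2 (k1 + k2) Hz ltac:(lia)).
    pose proof (P1 z Hz); pose proof (P2 z Hz). pose proof (Rabs_triang (p z) (q z)).
    assert (C1 * z ^ k1 <= C1 * z ^ (k1 + k2)) by (apply Rmult_le_compat_l; auto).
    assert (C2 * z ^ k2 <= C2 * z ^ (k1 + k2)) by (apply Rmult_le_compat_l; auto). nra.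
  - exists (C1 * C2), (k1 + k2)%nat; split; [nra|]. intros z Hz.
    rewrite Rabs_mult, pow_add.
    replace (C1 * C2 * (z ^ k1 * z ^ k2)) with ((C1 * z ^ k1) * (C2 * z ^ k2)) by ring.
    apply Rmult_le_compat; auto; apply Rabs_pos.
Qed.

Lemma exp_mult_INR n w : exp (INR n * w) = exp w ^ n.
Proof.
  induction n as [|n IH].
  - replace (INR 0 * w) with 0 by (simpl; ring). rewrite exp_0. simpl. ring.
  - rewrite S_INR, Rmult_plus_distr_r, Rmult_1_l, exp_plus, IH. simpl. ring.
Qed.

Lemma pow_le_exp m z : 0 < z -> z ^ m <= INR m ^ m * exp z.
Proof.
  intros Hz. destruct m as [|m].
  - simpl. pose proof (exp_ineq1_le z). lra.
  - assert (HN : 0 < INR (S m)) by (apply lt_0_INR; lia).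
    set (w := z / INR (S m)).
    assert (Hzw : z = INR (S m) * w) by (unfold w; field; lra).
    rewrite Hzw at 2. rewrite exp_mult_INR, Hzw, Rpow_mult_distr.
    apply Rmult_le_compat_l; [apply pow_le; lra|].
    apply pow_incr. split; [unfold w; apply Rlt_le, Rdiv_lt_0_compat; auto|].
    pose proof (exp_ineq1_le w); lra.
Qed.

Definition flat (p : R -> R) (y : R) : R :=
  if Rlt_dec 0 y then p (/ y) * exp (- / y) else 0.

Lemma flat_nonpos p y : y <= 0 -> flat p y = 0.
Proof. intros; unfold flat; destruct (Rlt_dec 0 y); [lra | auto]. Qed.

Lemma flat_deriv_neg p y : y < 0 -> derivable_pt_lim (flat p) y 0.
Proof.
  intros Hy. apply derivable_pt_lim_near with (fun _ => 0) (- y);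
    [lra | | apply derivable_pt_lim_const].
  intros z Hz; rewrite flat_nonpos; auto. apply Rabs_def2 in Hz; lra.
Qed.

(** The difference quotient at 0 is O(h): this is where flatness comes from. *)
Lemma flat_quotient_bound p : poly p ->
  exists M, 0 <= M /\ forall h, 0 < h < 1 -> Rabs (flat p h / h) <= M * h.
Proof.
  intros Hp. destruct (poly_bound p Hp) as [C [k [HC HB]]].
  set (K := INR (S (S k)) ^ S (S k)).
  assert (HK : 0 < K) by (apply pow_lt, lt_0_INR; lia).
  exists (C * K); split; [nra|]. intros h Hh.
  set (z := / h).
  assert (Hz : 1 < z) by (unfold z; rewrite <- Rinv_1; apply Rinv_lt_contravar; lra).
  assert (Hhz : h = / z) by (unfold z; rewrite Rinv_inv; auto).
  pose proof (exp_pos z) as Ez.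
  assert (Hq : flat p h / h = p z * z * / exp z).
  { unfold flat. destruct (Rlt_dec 0 h); [|lra]. fold z. rewrite exp_Ropp, Hhz.
    field. split; lra. }
  pose proof (pow_le_exp (S (S k)) z ltac:(lra)) as EB. fold K in EB. simpl in EB.
  pose proof (HB z ltac:(lra)) as PB.
  assert (Hzk : 0 < z ^ k) by (apply pow_lt; lra).
  rewrite Hq, !Rabs_mult, (Rabs_right z) by lra.
  rewrite (Rabs_right (/ exp z)) by (apply Rle_ge, Rlt_le, Rinv_0_lt_compat; auto).
  apply Rle_trans with (C * z ^ k * z * / exp z).
  { apply Rmult_le_compat_r; [apply Rlt_le, Rinv_0_lt_compat; auto|].
    apply Rmult_le_compat_r; lra. }
  rewrite Hhz. apply (Rmult_le_reg_r (exp z * z)); [nra|].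
  replace (C * z ^ k * z * / exp z * (exp z * z)) with (C * (z * (z * z ^ k)))
    by (field; lra).
  replace (C * K * / z * (exp z * z)) with (C * (K * exp z)) by (field; lra).
  apply Rmult_le_compat_l; lra.
Qed.

Lemma flat_deriv_zero p : poly p -> derivable_pt_lim (flat p) 0 0.
Proof.
  intros Hp. destruct (flat_quotient_bound p Hp) as [M [HM HQ]].
  intros eps Heps.
  assert (Hd : 0 < Rmin 1 (eps / (M + 1))) by (apply Rmin_pos; [lra | apply Rdiv_lt_0_compat; lra]).
  exists (mkposreal _ Hd). intros h Hh0 Hh. simpl in Hh.
  pose proof (Rmin_l 1 (eps / (M + 1))). pose proof (Rmin_r 1 (eps / (M + 1))).
  rewrite Rplus_0_l, (flat_nonpos p 0) by lra. rewrite Rminus_0_r, Rminus_0_r.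
  destruct (Rlt_dec 0 h) as [Hpos|Hneg].
  - rewrite Rabs_right in Hh by lra.
    apply Rle_lt_trans with (M * h); [apply HQ; lra|].
    assert (Hhe : h * (M + 1) < eps).
    { apply (Rmult_lt_reg_r (/ (M + 1))); [apply Rinv_0_lt_compat; lra|].
      replace (h * (M + 1) * / (M + 1)) with h by (field; lra). unfold Rdiv in *; lra. }
    nra.
  - rewrite flat_nonpos by lra. unfold Rdiv. rewrite Rmult_0_l, Rabs_R0; lra.
Qed.

Lemma derivable_pt_lim_inv_id y : y <> 0 ->
  derivable_pt_lim (fun y => / y) y (- (/ y * / y)).
Proof.
  intros Hy.
  pose proof (derivable_pt_lim_div (fct_cte 1) id y 0 1 (derivable_pt_lim_const 1 y)
                (derivable_pt_lim_id y) Hy) as Dq.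
  replace (- (/ y * / y)) with ((0 * id y - 1 * fct_cte 1 y) / Rsqr (id y))
    by (unfold id, fct_cte, Rsqr; field; auto).
  apply derivable_pt_lim_ext with (2 := Dq). intros; unfold div_fct, fct_cte, id, Rdiv; ring.
Qed.

Lemma flat_deriv_pos p p' y : (forall z, derivable_pt_lim p z (p' z)) -> 0 < y ->
  derivable_pt_lim (flat p) y (flat (fun z => z * z * (p z + (-1) * p' z)) y).
Proof.
  intros Dp Hy. unfold flat at 2; destruct (Rlt_dec 0 y) as [_|]; [|lra].
  apply derivable_pt_lim_near with (fun y => p (/ y) * exp (- / y)) y; [lra| |].
  { intros z Hz; unfold flat; destruct (Rlt_dec 0 z); auto. apply Rabs_def2 in Hz; lra. }
  assert (D1 : derivable_pt_lim (fun y => p (/ y)) y (p' (/ y) * (- (/ y * / y)))).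
  { apply (derivable_pt_lim_comp (fun y => / y) p); auto.
    apply derivable_pt_lim_inv_id; lra. }
  assert (D2 : derivable_pt_lim (fun y => exp (- / y)) y (exp (- / y) * (/ y * / y))).
  { replace (/ y * / y) with (- (- (/ y * / y))) by ring.
    apply (derivable_pt_lim_comp (fun y => - / y) exp); [|apply derivable_pt_lim_exp].
    apply (derivable_pt_lim_opp (fun y => / y)), derivable_pt_lim_inv_id; lra. }
  pose proof (derivable_pt_lim_mult _ _ _ _ _ D1 D2) as D3.
  match goal with |- derivable_pt_lim _ _ ?l => replace l with
    (p' (/ y) * - (/ y * / y) * exp (- / y) + p (/ y) * (exp (- / y) * (/ y * / y))) by ring end.
  apply derivable_pt_lim_ext with (2 := D3). intros; reflexivity.
Qed.

(** The derivative of a flat function is again flat, with polynomial z^2 (p - p'). *)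
Lemma flat_deriv p : poly p ->
  exists q, poly q /\ forall y, derivable_pt_lim (flat p) y (flat q y).
Proof.
  intros Hp. destruct (poly_deriv p Hp) as [p' [Hp' Dp]].
  exists (fun z => z * z * (p z + (-1) * p' z)); split; [repeat constructor; auto|].
  intros y. destruct (Rtotal_order y 0) as [Hy|[Hy|Hy]].
  - rewrite flat_nonpos by lra. apply flat_deriv_neg; auto.
  - subst y. rewrite flat_nonpos by lra. apply flat_deriv_zero; auto.
  - apply flat_deriv_pos; auto.
Qed.

Lemma flat_smooth p : poly p -> smooth_in everywhere (flat p).
Proof.
  intros Hp k. revert p Hp; induction k as [|k IH]; intros p Hp; simpl; auto.
  destruct (flat_deriv p Hp) as [q [Hq Dq]]. exists (flat q); split; auto.
Qed.

Definition flat1 : R -> R := flat (fun _ => 1).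

Lemma flat1_pos y : 0 < y -> 0 < flat1 y.
Proof. intros; unfold flat1, flat; destruct (Rlt_dec 0 y); [|lra]. rewrite Rmult_1_l; apply exp_pos. Qed.

Lemma flat1_nonneg y : 0 <= flat1 y.
Proof.
  destruct (Rlt_dec 0 y); [apply Rlt_le, flat1_pos; auto|].
  unfold flat1; rewrite flat_nonpos; lra.
Qed.

Definition step (y : R) : R := flat1 y * / (flat1 y + flat1 (1 - y)).

Lemma step_den_pos y : 0 < flat1 y + flat1 (1 - y).
Proof.
  destruct (Rlt_dec 0 y).
  - pose proof (flat1_pos y r); pose proof (flat1_nonneg (1 - y)); lra.
  - pose proof (flat1_pos (1 - y) ltac:(lra)); pose proof (flat1_nonneg y); lra.
Qed.

Lemma step_smooth : smooth_in everywhere step.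
Proof.
  intros k. unfold step. apply Ck_on_mult.
  - apply flat_smooth; constructor.
  - apply Ck_on_inv; [intros x _; pose proof (step_den_pos x); lra|].
    apply Ck_on_plus; [apply flat_smooth; constructor|].
    apply Ck_on_comp; [apply flat_smooth; constructor|].
    apply Ck_on_plus; [apply Ck_on_const | apply Ck_on_opp, Ck_on_id].
Qed.

Lemma step_0 y : y <= 0 -> step y = 0.
Proof. intros; unfold step, flat1; rewrite flat_nonpos; auto; ring. Qed.

Lemma step_1 y : 1 <= y -> step y = 1.
Proof.
  intros; unfold step. replace (flat1 (1 - y)) with 0 by (unfold flat1; rewrite flat_nonpos; lra).
  rewrite Rplus_0_r. apply Rinv_r, Rgt_not_eq, flat1_pos; lra.
Qed.

Lemma step_range y : 0 <= step y <= 1.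
Proof.
  unfold step. pose proof (step_den_pos y). pose proof (flat1_nonneg y).
  pose proof (flat1_nonneg (1 - y)). split.
  - apply Rmult_le_pos; auto. apply Rlt_le, Rinv_0_lt_compat; auto.
  - apply (Rmult_le_reg_r (flat1 y + flat1 (1 - y))); auto.
    rewrite Rmult_assoc, Rinv_l by lra. lra.
Qed.

Lemma step_scaled_0 c w y : 0 < w -> y <= c -> step ((y - c) * / w) = 0.
Proof.
  intros Hw Hy. apply step_0. assert (0 < / w) by (apply Rinv_0_lt_compat; lra). nra.
Qed.

Lemma step_scaled_1 c w y : 0 < w -> c + w <= y -> step ((y - c) * / w) = 1.
Proof.
  intros Hw Hy. apply step_1. apply (Rmult_le_reg_r w); [lra|].
  rewrite Rmult_assoc, Rinv_l by lra. lra.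
Qed.

Definition bump (s0 r s : R) : R :=
  step ((s - (s0 - r)) * / (r / 2)) * step (((- s) - (- s0 - r)) * / (r / 2)).

Lemma bump_smooth s0 r : smooth_in everywhere (bump s0 r).
Proof.
  intros k. unfold bump.
  apply Ck_on_mult; apply Ck_on_comp; try apply step_smooth;
    apply Ck_on_mult; try apply Ck_on_const; apply Ck_on_plus; try apply Ck_on_const;
    [apply Ck_on_id | apply Ck_on_opp, Ck_on_id].
Qed.

Lemma bump_1 s0 r s : 0 < r -> Rabs (s - s0) <= r / 2 -> bump s0 r s = 1.
Proof.
  intros Hr Hs. unfold bump.
  assert (- (r / 2) <= s - s0 <= r / 2)
    by (revert Hs; unfold Rabs; destruct (Rcase_abs (s - s0)); lra).
  rewrite !step_scaled_1 by lra. ring.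
Qed.

Lemma bump_0 s0 r s : 0 < r -> r <= Rabs (s - s0) -> bump s0 r s = 0.
Proof.
  intros Hr Hs. unfold bump. destruct (Rle_dec 0 (s - s0)).
  - rewrite Rabs_right in Hs by lra. rewrite (step_scaled_0 (- s0 - r)); [ring | lra | lra].
  - rewrite Rabs_left in Hs by lra. rewrite (step_scaled_0 (s0 - r)); [ring | lra | lra].
Qed.

(** * Smooth retractions of [0,1] onto [a/2, 1-a/2] *)

Section Retraction.
Variable a : R.
Hypothesis Ha : 0 < a < 1/2.

Definition ell (y : R) : R := a/2 + (y - a/2) * step ((y - a/2) * / (a/2)).

Lemma ell_smooth : smooth_in everywhere ell.
Proof.
  intros k. unfold ell. apply Ck_on_plus; [apply Ck_on_const|]. apply Ck_on_mult.
  - apply Ck_on_plus; [apply Ck_on_id | apply Ck_on_const].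
  - apply Ck_on_comp; [apply step_smooth|].
    apply Ck_on_mult; [|apply Ck_on_const]. apply Ck_on_plus; [apply Ck_on_id | apply Ck_on_const].
Qed.

Lemma ell_low y : y <= a/2 -> ell y = a/2.
Proof. intros; unfold ell. rewrite step_scaled_0 by lra. ring. Qed.

Lemma ell_id y : a <= y -> ell y = y.
Proof. intros; unfold ell. rewrite step_scaled_1 by lra. ring. Qed.

Lemma ell_bounds y : a/2 <= ell y <= Rmax y (a/2).
Proof.
  pose proof (Rmax_l y (a/2)); pose proof (Rmax_r y (a/2)).
  destruct (Rle_dec y (a/2)); [rewrite ell_low; lra|].
  unfold ell. pose proof (step_range ((y - a / 2) * / (a / 2))). nra.
Qed.

Definition rho (y : R) : R := 1 - ell (1 - ell y).

Lemma rho_smooth : smooth_in everywhere rho.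
Proof.
  intros k. unfold rho. apply Ck_on_plus; [apply Ck_on_const|]. apply Ck_on_opp.
  apply Ck_on_comp; [apply ell_smooth|].
  apply Ck_on_plus; [apply Ck_on_const|]. apply Ck_on_opp, ell_smooth.
Qed.

Lemma rho_low y : y <= a/2 -> rho y = a/2.
Proof. intros; unfold rho. rewrite (ell_low y), ell_id by lra. ring. Qed.

Lemma rho_high y : 1 - a/2 <= y -> rho y = 1 - a/2.
Proof. intros; unfold rho. rewrite (ell_id y), ell_low by lra. ring. Qed.

Lemma rho_id y : a <= y <= 1 - a -> rho y = y.
Proof. intros; unfold rho. rewrite (ell_id y), ell_id by lra. ring. Qed.

Lemma rho_range y : a/2 <= rho y <= 1 - a/2.
Proof.
  unfold rho. pose proof (ell_bounds y). pose proof (ell_bounds (1 - ell y)).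
  unfold Rmax in *. destruct (Rle_dec (1 - ell y) (a/2)); lra.
Qed.

Lemma rho_lt y : y < a -> rho y < a.
Proof.
  intros. pose proof (ell_bounds y). unfold rho. rewrite (ell_id (1 - ell y));
    unfold Rmax in *; destruct (Rle_dec y (a/2)); lra.
Qed.

Lemma rho_gt y : 1 - a < y -> 1 - a < rho y.
Proof.
  intros. unfold rho. rewrite (ell_id y) by lra. pose proof (ell_bounds (1 - y)).
  unfold Rmax in *; destruct (Rle_dec (1 - y) (a/2)); lra.
Qed.

Lemma rho_reflect y :
  (rho y < a -> y < a) /\ (1 - a < rho y -> 1 - a < y) /\
  (a < rho y -> a < y) /\ (rho y < 1 - a -> y < 1 - a).
Proof.
  pose proof (rho_lt y). pose proof (rho_gt y).
  destruct (Rlt_dec y a); [|destruct (Rlt_dec (1 - a) y)].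
  - lra.
  - lra.
  - rewrite rho_id; lra.
Qed.

End Retraction.

(** * The spaces I and bold I *)

Lemma gen_sfun X f : gen X f -> sfun X f.
Proof. intros H c Hc; apply Hc; auto. Qed.

Lemma smooth_map_of_curves X Y (phi : car X -> car Y) :
  (forall c, curve X c -> curve Y (fun s => phi (c s))) -> smooth_map X Y phi.
Proof. intros H g Hg c Hc. apply Hg, H, Hc. Qed.

Lemma subspace_incl_smooth X (P : car X -> Prop) :
  smooth_map (Subspace X P) X (fun a => proj1_sig a).
Proof.
  apply smooth_map_of_curves. intros c Hc f Hf.
  apply (Hc (fun a => f (proj1_sig a))). exists f; split; [apply gen_sfun|]; auto.
Qed.

Lemma curve_fst X Y (c : R -> car (Product X Y)) : curve (Product X Y) c ->
  curve X (fun s => fst (c s)).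
Proof.
  intros Hc f Hf. apply (Hc (fun p => f (fst p))). left. exists f; split; [apply gen_sfun|]; auto.
Qed.

Lemma curve_snd X Y (c : R -> car (Product X Y)) : curve (Product X Y) c ->
  curve Y (fun s => snd (c s)).
Proof.
  intros Hc f Hf. apply (Hc (fun p => f (snd p))). right. exists f; split; [apply gen_sfun|]; auto.
Qed.

Lemma curve_I (c : R -> car Ispace) : smooth (fun s => proj1_sig (c s)) -> curve Ispace c.
Proof.
  intros Hc g [f [Hf ->]].
  assert (Hsf : smooth f) by (apply (Hf (fun s => s)); intros g Hg; exact Hg).
  apply (smooth_comp f (fun s => proj1_sig (c s))); auto. apply smooth_in_everywhere; auto.
Qed.

Lemma val_inj (p q : car Ibold) : proj1_sig p = proj1_sig q -> p = q.
Proof. destruct p as [p Hp], q as [q Hq]; simpl; intros ->. f_equal; apply proof_irrelevance. Qed.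

(** [rho a] is constant near both ends, hence a structure function of bold I. *)
Lemma rho_gen a : 0 < a < 1/2 -> gen Ibold (fun p : car Ibold => rho a (proj1_sig p)).
Proof.
  intros Ha. split.
  - intros c Hc. apply smooth_comp; [apply rho_smooth|].
    apply (Hc (fun a => proj1_sig a)). exists (fun x => x). split; [|reflexivity].
    intros c' Hc'. apply (Hc' (fun y => y)). apply smooth_of_smooth_in; intros k; apply Ck_on_id.
  - exists (a/2); split; [lra|]. split.
    + intros x y Hx Hy. rewrite !(rho_low a Ha); lra.
    + intros x y Hx Hy. rewrite !(rho_high a Ha); lra.
Qed.

Lemma Ibold_curve_local (x : R -> car Ibold) a s0 : curve Ibold x -> 0 < a < 1/2 ->
  near s0 (fun s => proj1_sig (x s) < a) \/ near s0 (fun s => 1 - a < proj1_sig (x s)) \/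
  exists U, open_set U /\ U s0 /\
    (forall s, U s -> a/2 < proj1_sig (x s) < 1 - a/2) /\
    smooth_in U (fun s => proj1_sig (x s)).
Proof.
  intros Hx Ha. set (X := fun s => proj1_sig (x s)).
  assert (HR : forall b, 0 < b < 1/2 -> continuity_pt (fun s => rho b (X s)) s0).
  { intros b Hb. apply (smooth_in_continuous everywhere); [|exact I].
    apply smooth_in_everywhere, (Hx (fun p => rho b (proj1_sig p))), rho_gen, Hb. }
  destruct (Rlt_dec (X s0) a) as [Llow|Llow]; [|destruct (Rlt_dec (1 - a) (X s0)) as [Lhigh|Lhigh]].
  - left. apply near_mono with (fun s => rho a (X s) < a).
    + intros s Hs. apply (rho_reflect a Ha); auto.
    + apply continuous_lt; [apply HR; auto | apply rho_lt; auto].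
  - right; left. apply near_mono with (fun s => 1 - a < rho a (X s)).
    + intros s Hs. apply (rho_reflect a Ha); auto.
    + apply continuous_gt; [apply HR; auto | apply rho_gt; auto].
  - right; right. set (b := a/2). assert (Hb : 0 < b < 1/2) by (unfold b; lra).
    assert (E0 : rho b (X s0) = X s0) by (apply rho_id; unfold b in *; lra).
    assert (Hn : near s0 (fun s => b < rho b (X s) /\ rho b (X s) < 1 - b)).
    { apply near_and; [apply continuous_gt | apply continuous_lt]; try apply HR; auto;
        unfold b in *; lra. }
    destruct Hn as [d [Hd Hball]].
    assert (HXb : forall s, Rabs (s - s0) < d -> b < X s < 1 - b /\ rho b (X s) = X s).
    { intros s Hs. destruct (Hball s Hs).
      pose proof (rho_reflect b Hb (X s)) as Hr.
      assert (b < X s < 1 - b) by (split; apply Hr; auto).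
      split; auto. apply rho_id; lra. }
    exists (fun s => Rabs (s - s0) < d). split; [apply ball_open|].
    split; [rewrite Rminus_diag, Rabs_R0; auto|]. split; [intros s Hs; apply HXb, Hs|].
    apply smooth_in_ext with (fun s => rho b (X s)); [apply ball_open | intros s Hs; apply HXb, Hs|].
    apply smooth_in_of_smooth, (Hx (fun p => rho b (proj1_sig p))), rho_gen, Hb.
Qed.

(** * Clamped paths into bold I *)

Definition clamp (y : R) : R := Rmax 0 (Rmin 1 y).

Lemma clamp_cases y :
  (y <= 0 /\ clamp y = 0) \/ (0 <= y <= 1 /\ clamp y = y) \/ (1 <= y /\ clamp y = 1).
Proof. unfold clamp, Rmax, Rmin. destruct (Rle_dec 1 y); destruct (Rle_dec 0 _); lra. Qed.

Lemma clamp_range y : 0 <= clamp y <= 1.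
Proof. destruct (clamp_cases y) as [|[|]]; lra. Qed.

Definition to_I (y : R) : car Ibold := exist (fun x => 0 <= x <= 1) (clamp y) (clamp_range y).

Lemma exterior_open s0 r : open_set (fun s => r < Rabs (s - s0)).
Proof.
  intros x Hx. exists (Rabs (x - s0) - r); split; [lra|]. intros y Hy.
  pose proof (Rabs_triang (x - y) (y - s0)) as T.
  replace (x - y + (y - s0)) with (x - s0) in T by ring.
  rewrite <- Rabs_Ropp in Hy. replace (- (y - x)) with (x - y) in Hy by ring. lra.
Qed.

(** A structure function of I composed with a path that is smooth near s0
    and passes through the interior of I at s0 is smooth near s0: cut the
    path off with a bump and retract it into I to get a curve of I. *)
Lemma sfun_I_local f Phi s0 : sfun Ispace f -> smooth_at Phi s0 -> 0 < Phi s0 < 1 ->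
  smooth_at (fun s => f (to_I (Phi s))) s0.
Proof.
  intros Hf [U [HU [Us0 HS]]] HPhi.
  set (b := Rmin (Phi s0) (1 - Phi s0) / 2).
  assert (Hb : 0 < b < 1/2 /\ b < Phi s0 < 1 - b).
  { unfold b. pose proof (Rmin_l (Phi s0) (1 - Phi s0)); pose proof (Rmin_r (Phi s0) (1 - Phi s0)).
    assert (0 < Rmin (Phi s0) (1 - Phi s0)) by (apply Rmin_pos; lra). lra. }
  assert (Hc : continuity_pt Phi s0) by (apply (smooth_in_continuous U); auto).
  destruct (near_and _ _ _ (near_open _ _ HU Us0)
             (near_and _ _ _ (continuous_gt _ _ b Hc ltac:(lra)) (continuous_lt _ _ (1 - b) Hc ltac:(lra))))
    as [d [Hd N]].
  set (Psi := fun s => bump s0 (d/2) s * Phi s).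
  assert (HPsi : smooth Psi).
  { apply smooth_glue. intros x. destruct (Rlt_dec (Rabs (x - s0)) d) as [Hlt|Hnlt].
    - exists (fun s => Rabs (s - s0) < d); split; [apply ball_open|]. split; auto.
      intros k. apply Ck_on_mult.
      + apply Ck_on_sub with everywhere; [intros; exact I | apply bump_smooth].
      + apply Ck_on_sub with U; [intros y Hy; apply (N y Hy) | apply HS].
    - apply smooth_at_near_const with 0.
      apply near_mono with (fun s => d/2 < Rabs (s - s0)); [|apply near_open; [apply exterior_open | lra]].
      intros y Hy. unfold Psi. rewrite bump_0; [ring | lra | lra]. }
  set (c := fun s => exist (fun x => 0 <= x <= 1) (rho b (Psi s))
               (conj (Rle_trans _ _ _ (ltac:(lra) : 0 <= b/2) (proj1 (rho_range b (proj1 Hb) (Psi s))))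
                     (Rle_trans _ _ _ (proj2 (rho_range b (proj1 Hb) (Psi s))) (ltac:(lra) : 1 - b/2 <= 1)))
             : car Ispace).
  assert (Hcur : curve Ispace c) by (apply curve_I; simpl; apply smooth_comp; auto; apply rho_smooth).
  apply smooth_at_near_eq with (fun s => f (c s)); [|apply smooth_at_of_smooth, Hf, Hcur].
  exists (d/4); split; [lra|]. intros s Hs. f_equal. apply val_inj. simpl.
  destruct (N s ltac:(lra)) as [_ [N1 N2]].
  unfold Psi. rewrite bump_1, Rmult_1_l by (try lra; apply Rlt_le; lra).
  rewrite rho_id by lra. destruct (clamp_cases (Phi s)) as [|[|]]; lra.
Qed.

Lemma clamp_curve Phi :
  (forall eps, 0 < eps < 1/4 -> forall s0,
     near s0 (fun s => Phi s < eps) \/ near s0 (fun s => 1 - eps < Phi s) \/ smooth_at Phi s0) ->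
  curve Ibold (fun s => to_I (Phi s)).
Proof.
  intros HP f [Hf [eps [He [H0 H1]]]]. apply smooth_glue. intros s0.
  assert (Hlow : near s0 (fun s => Phi s < eps) -> smooth_at (fun s => f (to_I (Phi s))) s0).
  { intros Hn. apply smooth_at_near_const with (f (to_I 0)). apply near_mono with (2 := Hn).
    intros s Hs. apply H0; simpl; destruct (clamp_cases (Phi s)) as [|[|]];
      destruct (clamp_cases 0) as [|[|]]; lra. }
  assert (Hhigh : near s0 (fun s => 1 - eps < Phi s) -> smooth_at (fun s => f (to_I (Phi s))) s0).
  { intros Hn. apply smooth_at_near_const with (f (to_I 1)). apply near_mono with (2 := Hn).
    intros s Hs. apply H1; simpl; destruct (clamp_cases (Phi s)) as [|[|]];
      destruct (clamp_cases 1) as [|[|]]; lra. }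
  destruct (HP eps He s0) as [Hn|[Hn|Hsm]]; auto.
  assert (Hc : continuity_pt Phi s0).
  { destruct Hsm as [U [HU [Us0 HS]]]. apply (smooth_in_continuous U); auto. }
  destruct (Rlt_dec (Phi s0) eps); [apply Hlow, continuous_lt; auto|].
  destruct (Rlt_dec (1 - eps) (Phi s0)); [apply Hhigh, continuous_gt; auto|].
  apply sfun_I_local; auto; lra.
Qed.

(** * The neighbourhood function u and the deformation H *)

(** Points of I are reals; make this visible to the arithmetic tactics. *)
Ltac real_points := change (car Rspace) with R in *; cbv beta in *.

Definition kappa (y : R) : R := step ((y - 1/3) * / (1/3)).

Lemma kappa_range y : 0 <= kappa y <= 1.
Proof. apply step_range. Qed.

Lemma kappa_smooth : smooth_in everywhere kappa.
Proof.
  intros k; unfold kappa. apply Ck_on_comp; [apply step_smooth|].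
  apply Ck_on_mult; [apply Ck_on_plus; [apply Ck_on_id | apply Ck_on_const] | apply Ck_on_const].
Qed.

(** Being constant near the ends, [kappa] turns curves of bold I into smooth maps. *)
Lemma kappa_curve (t : R -> car Ibold) : curve Ibold t ->
  smooth (fun s => kappa (proj1_sig (t s))).
Proof.
  intros Ht. apply smooth_glue. intros s0.
  destruct (Ibold_curve_local t (1/3) s0 Ht ltac:(lra)) as [Hn|[Hn|[U [HU [Us0 [_ HS]]]]]].
  - apply smooth_at_near_const with 0. apply near_mono with (2 := Hn).
    intros s Hs. apply step_scaled_0; lra.
  - apply smooth_at_near_const with 1. apply near_mono with (2 := Hn).
    intros s Hs. apply step_scaled_1; lra.
  - exists U; split; [auto|]. split; [auto|]. intros k. apply Ck_on_comp; [apply kappa_smooth | apply HS].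
Qed.

(** u(x) = 8x(1-x), clamped: it vanishes exactly at the ends, and u(x) < 1
    forces x < 3/8 or x > 5/8. *)
Definition u (x : car Ibold) : car Ibold :=
  to_I (8 * proj1_sig x * (1 - proj1_sig x)).

Lemma u_curve (x : R -> car Ibold) : curve Ibold x -> curve Ibold (fun s => u (x s)).
Proof.
  intros Hx. apply clamp_curve. intros eps He s0.
  assert (Hrng : forall s, 0 <= proj1_sig (x s) <= 1) by (intros s; apply (proj2_sig (x s))).
  destruct (Ibold_curve_local x (eps/8) s0 Hx ltac:(lra)) as [Hn|[Hn|[U [HU [Us0 [_ HS]]]]]].
  - left. apply near_mono with (2 := Hn). intros s Hs. pose proof (Hrng s). nra.
  - left. apply near_mono with (2 := Hn). intros s Hs. pose proof (Hrng s).
    pose proof (Rle_0_sqr (1 - proj1_sig (x s))). unfold Rsqr in *. nra.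
  - right; right. exists U; split; [auto|]. split; [auto|]. intros k.
    apply Ck_on_mult; [apply Ck_on_scal, HS|].
    apply Ck_on_plus; [apply Ck_on_const | apply Ck_on_opp, HS].
Qed.

Lemma in_Ends (y : car Ibold) : proj1_sig y = 0 \/ proj1_sig y = 1 -> exists a, incl a = y.
Proof. intros Hy. exists (exist _ y Hy). reflexivity. Qed.

Lemma u_zero_iff x : proj1_sig (u x) = 0 <-> exists a, incl a = x.
Proof.
  pose proof (proj2_sig x) as Hx. simpl in Hx. unfold u; simpl. real_points. split.
  - intros Hu. apply in_Ends.
    assert (Hle : 8 * proj1_sig x * (1 - proj1_sig x) <= 0)
      by (destruct (clamp_cases (8 * proj1_sig x * (1 - proj1_sig x))) as [|[|]]; real_points; lra).
    destruct (Rle_lt_or_eq_dec 0 _ (proj1 Hx)) as [Hpos|Hzero]; [right | left; auto].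
    destruct (Rle_lt_or_eq_dec _ 1 (proj2 Hx)) as [Hlt|Hone]; [real_points; nra | auto].
  - intros [[y Hy] <-]. unfold incl; simpl.
    destruct (clamp_cases (8 * proj1_sig y * (1 - proj1_sig y))) as [|[|]]; real_points; nra.
Qed.

Definition H (p : car (Product Ibold Ibold)) : car Ibold :=
  to_I ((1 + 3 * kappa (proj1_sig (fst p))) * (proj1_sig (snd p) - 1/2) + 1/2).

(** H o (t, x) is a curve as soon as kappa o t is smooth wherever x stays
    inside (0,1): near the ends the clamp makes H locally constant. *)
Lemma H_curve (t x : R -> car Ibold) : curve Ibold x ->
  (forall U s0, open_set U -> U s0 -> (forall s, U s -> 0 < proj1_sig (x s) < 1) ->
     smooth_at (fun s => kappa (proj1_sig (t s))) s0) ->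
  curve Ibold (fun s => H (t s, x s)).
Proof.
  intros Hx HT. apply clamp_curve. intros eps He s0.
  assert (Hk : forall s, 0 <= kappa (proj1_sig (t s)) <= 1) by (intros; apply kappa_range).
  destruct (Ibold_curve_local x (eps/2) s0 Hx ltac:(lra)) as [Hn|[Hn|[U [HU [Us0 [HX HS]]]]]].
  - left. apply near_mono with (2 := Hn). intros s Hs. pose proof (Hk s). simpl.
    assert (proj1_sig (x s) < 1/2) by lra. real_points. nra.
  - right; left. apply near_mono with (2 := Hn). intros s Hs. pose proof (Hk s). simpl.
    assert (1/2 < proj1_sig (x s)) by lra. real_points. nra.
  - right; right.
    assert (HXU : forall s, U s -> 0 < proj1_sig (x s) < 1) by (intros s Hs; pose proof (HX s Hs); lra).
    destruct (smooth_at_both _ _ s0 (HT U s0 HU Us0 HXU) (ex_intro _ U (conj HU (conj Us0 HS))))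
      as [V [HV [Vs0 [HKV HXV]]]].
    exists V; split; [auto|]. split; [auto|]. intros k. simpl.
    apply Ck_on_plus; [|apply Ck_on_const]. apply Ck_on_mult.
    + apply Ck_on_plus; [apply Ck_on_const | apply Ck_on_scal, HKV].
    + apply Ck_on_plus; [apply HXV | apply Ck_on_const].
Qed.

Lemma H_smooth : smooth_map (Product Ibold Ibold) Ibold H.
Proof.
  apply smooth_map_of_curves. intros c Hc.
  apply (H_curve (fun s => fst (c s)) (fun s => snd (c s))); [exact (curve_snd _ _ c Hc)|].
  intros U s0 _ _ _. apply smooth_at_of_smooth, kappa_curve, (curve_fst _ _ c Hc).
Qed.

(** Where x stays in (0,1), no point of Lambda is close, so the FCIP
    hypothesis makes t, hence kappa o t, smooth there. *)
Lemma kappa_smooth_off_Lambda (t : R -> car Ibold) (x : R -> car Ibold) :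
  (forall eps, 0 < eps -> forall a b : option R,
     (forall s, Defs.in_int a b s -> forall s', Lambda Ibold Ends incl x s' -> eps < Rabs (s - s')) ->
     smooth_on a b (fun s => proj1_sig (t s))) ->
  forall U s0, open_set U -> U s0 -> (forall s, U s -> 0 < proj1_sig (x s) < 1) ->
    smooth_at (fun s => kappa (proj1_sig (t s))) s0.
Proof.
  intros Hcond U s0 HU Us0 HX. destruct (HU s0 Us0) as [d [Hd Hball]].
  assert (Hfar : forall s, Defs.in_int (Some (s0 - d/2)) (Some (s0 + d/2)) s ->
            forall s', Lambda Ibold Ends incl x s' -> d/4 < Rabs (s - s')).
  { intros s [Hs1 Hs2] s' [[a Ha] _].
    assert (Hs' : d <= Rabs (s' - s0)).
    { destruct (Rle_dec d (Rabs (s' - s0))) as [|Hlt]; auto.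
      pose proof (HX s' (Hball s' ltac:(lra))) as Hin. rewrite <- Ha in Hin.
      destruct a as [y [Hy|Hy]]; unfold incl in Hin; simpl in Hin; real_points; lra. }
    pose proof (Rabs_triang (s' - s) (s - s0)) as T.
    replace (s' - s + (s - s0)) with (s' - s0) in T by ring.
    rewrite (Rabs_minus_sym s' s) in T.
    assert (Rabs (s - s0) < d/2) by (apply Rabs_def1; lra). lra. }
  exists (Defs.in_int (Some (s0 - d/2)) (Some (s0 + d/2))). split; [apply open_in_int|].
  split; [unfold Defs.in_int; split; lra|].
  intros k. apply Ck_on_comp; [apply kappa_smooth|].
  apply smooth_in_int, (Hcond (d/4) ltac:(lra)), Hfar.
Qed.

Lemma H_FCIP : FCIP_map Ibold Ends Ibold incl H.
Proof.
  intros h Hh t x Hx Hcond. apply Hh, H_curve; auto.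
  apply kappa_smooth_off_Lambda; auto.
Qed.

Lemma H_start x : H (I0, x) = x.
Proof.
  apply val_inj. unfold H; simpl. unfold kappa. rewrite step_scaled_0 by lra.
  pose proof (proj2_sig x) as Hx. simpl in Hx.
  destruct (clamp_cases ((1 + 3 * 0) * (proj1_sig x - 1/2) + 1/2)) as [|[|]];
    real_points; lra.
Qed.

Lemma H_rel t a : H (t, incl a) = incl a.
Proof.
  apply val_inj. unfold H; simpl. pose proof (kappa_range (proj1_sig t)).
  destruct a as [y Hy]; unfold incl; simpl.
  destruct (clamp_cases ((1 + 3 * kappa (proj1_sig t)) * (proj1_sig y - 1/2) + 1/2)) as [|[|]];
    real_points; destruct Hy as [Hy|Hy]; rewrite Hy in *; nra.
Qed.

Lemma H_end x : proj1_sig (u x) < 1 -> exists a, H (I1, x) = incl a.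
Proof.
  intros Hu. unfold u in Hu; simpl in Hu. pose proof (proj2_sig x) as Hx. simpl in Hx.
  assert (Hfar : proj1_sig x <= 3/8 \/ 5/8 <= proj1_sig x).
  { assert (Hlt : 8 * proj1_sig x * (1 - proj1_sig x) < 1)
      by (destruct (clamp_cases (8 * proj1_sig x * (1 - proj1_sig x))) as [|[|]]; real_points; lra).
    destruct (Rle_dec (proj1_sig x) (3/8)); [left; auto|].
    destruct (Rle_dec (5/8) (proj1_sig x)); [right; auto | real_points; nra]. }
  destruct (in_Ends (H (I1, x))) as [a Ha]; [|exists a; auto].
  unfold H; simpl. unfold kappa. rewrite step_scaled_1 by lra.
  destruct (clamp_cases ((1 + 3 * 1) * (proj1_sig x - 1/2) + 1/2)) as [|[|]];
    real_points; lra.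
Qed.

Theorem lemma3 : SNDR Ibold Ends incl.
Proof.
  split; [apply subspace_incl_smooth|].
  exists u. split; [apply smooth_map_of_curves, u_curve|].
  split; [apply u_zero_iff|].
  exists H. split; [apply H_smooth|]. split; [apply H_FCIP|].
  split; [apply H_start|]. split; [apply H_rel | apply H_end].
Qed.
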